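(* Let $n\ge 2$ and let $R$ be the complex Leibniz algebra with basis $\{h,e_1,\dots,e_n\}$ and nonzero products $[e_i,e_1]=e_{i+1}$ ($1\le i\le n-1$), $[h,e_1]=-e_1$, $[e_i,h]=ie_i$ ($1\le i\le n$). Then every biderivation of $R$ is inner, i.e. of the form $(-\mathrm{ad}_x,\mathrm{Ad}_x)$ for some $x\in R$.
   Context: Leibniz algebras are right Leibniz over $\mathbb C$: $[x,[y,z]]=[[x,y],z]-[[x,z],y]$. Unlisted products are zero. A derivation is a linear $d$ with $d([x,y])=[d(x),y]+[x,d(y)]$; an anti-derivation is a linear $D$ with $D([x,y])=[D(x),y]-[D(y),x]$; a biderivation is a pair $(d,D)$ of a derivation and an anti-derivation with $[x,d(y)]=[x,D(y)]$ for all $x,y$. For $x\in R$, $\mathrm{ad}_x(y)=[y,x]$ and $\mathrm{Ad}_x(y)=[x,y]$; the biderivation $(-\mathrm{ad}_x,\mathrm{Ad}_x)$ is called inner. *)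

From HB Require Import structures.
From mathcomp Require Import all_boot all_order all_algebra.
From mathcomp Require Import complex.
From mathcomp Require Import Rstruct.
Set Implicit Arguments. Unset Strict Implicit. Unset Printing Implicit Defensive.
Import Order.TTheory GRing.Theory Num.Theory.
Local Open Scope ring_scope.

Definition CC : Type := (Rdefinitions.R)[i].

Section Leib.
Variable F : fieldType.

Definition is_derivation {V : lmodType F} (br : V -> V -> V) (d : V -> V) :=
  forall x y, d (br x y) = br (d x) y + br x (d y).

Definition is_antiderivation {V : lmodType F} (br : V -> V -> V) (D : V -> V) :=
  forall x y, D (br x y) = br (D x) y - br (D y) x.

Definition is_biderivation {V : lmodType F} (br : V -> V -> V)
  (d D : {linear V -> V}) :=
  [/\ is_derivation br d, is_antiderivation br D &
      forall x y, br x (d y) = br x (D y)].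

(* ad_x y = [y,x], Ad_x y = [x,y]; inner biderivation (-ad_x, Ad_x). *)
Definition is_inner_biderivation {V : lmodType F} (br : V -> V -> V)
  (d D : V -> V) :=
  exists x : V, forall y, d y = - br y x /\ D y = br x y.

(* The algebra R of the theorem: basis h = b_0, e_i = b_i (1 <= i <= n),
   realised as row vectors of length n+1. *)
Definition bvec (n k : nat) : 'rV[F]_(n.+1) := \row_(j < n.+1) ((j : nat) == k)%:R.

(* products of basis vectors; note bvec n (n+1) = 0, so [e_n,e_1] = 0. *)
Definition br_basis (n : nat) (a b : 'I_(n.+1)) : 'rV[F]_(n.+1) :=
  if (a != 0%N :> nat) && (b == 1%N :> nat) then @bvec n (a.+1)
  else if (a == 0%N :> nat) && (b == 1%N :> nat) then - @bvec n 1
  else if (a != 0%N :> nat) && (b == 0%N :> nat) then (a : nat)%:R *: @bvec n a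
  else 0.

Definition brR (n : nat) (x y : 'rV[F]_(n.+1)) : 'rV[F]_(n.+1) :=
  \sum_(a < n.+1) \sum_(b < n.+1) (x 0 a * y 0 b) *: @br_basis n a b.

End Leib.

From HB Require Import structures.
From mathcomp Require Import all_boot all_order all_algebra.
From mathcomp Require Import complex.
From mathcomp Require Import Rstruct.
From mathcomp Require Import sesquilinear ring.
Set Implicit Arguments. Unset Strict Implicit. Unset Printing Implicit Defensive.
Import GRing.Theory.
Local Open Scope ring_scope.

(* Since e_(k+1) = [e_k, e_1], the algebra is generated by h and e_1, so a
   derivation or anti-derivation is determined by its values there.  For a
   biderivation (d, D), the identities d[h,h] = 0, d e_1 = d[e_1,h],
   D e_1 = D[e_1,h] and [h, d y] = [h, D y] fix enough coordinates of d h, d e_1,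
   D h and D e_1 to produce an x with d = -ad_x and D = Ad_x on h and e_1.  By the
   Leibniz identity, ad_x is a derivation and Ad_x an anti-derivation, so
   d + ad_x and D - Ad_x vanish on the generators and hence everywhere. *)

Lemma cancel_scaled_diff (F : fieldType) (c u v A B : F) :
  c != 0 -> A = B -> A - B = c * (u - v) -> u = v.
Proof.
move=> c_neq0 eAB; rewrite eAB subrr => /esym/eqP.
by rewrite mulf_eq0 (negbTE c_neq0) subr_eq0 => /eqP.
Qed.

Lemma sum_ord_delta (R : pzSemiRingType) m (G : nat -> R) p :
  \sum_(i < m) ((i : nat) == p)%:R * G i = (p < m)%:R * G p.
Proof.
rewrite (eq_bigr (fun i : 'I_m => if (i : nat) == p then G i else 0)); last first.
  by move=> i _; case: eqP; rewrite (mul1r, mul0r).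
by rewrite -big_mkcond big_ord1_eq; case: ltnP; rewrite (mul1r, mul0r).
Qed.

Lemma sum2_ord_delta (R : comPzSemiRingType) m (G : nat -> nat -> R) p q :
  \sum_(a < m) \sum_(b < m) ((a : nat) == p)%:R * ((b : nat) == q)%:R * G a b
  = (p < m)%:R * ((q < m)%:R * G p q).
Proof.
under eq_bigr => a _ do under eq_bigr => b _ do rewrite -mulrA mulrCA.
under eq_bigr => a _ do rewrite (sum_ord_delta _ (fun b => _ * G a b)) mulrCA.
exact: (sum_ord_delta _ (fun a => (q < m)%:R * G a q)).
Qed.

Section LeibnizAlgebra.
Variables (F : fieldType) (V : lmodType F) (br : {bilinear V -> V -> V}).
Hypothesis br_leibniz : forall u v w, br (br u v) w = br u (br v w) + br (br u w) v.

Definition ad (x : V) : V -> V := applyr br x.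
Definition Ad (x : V) : V -> V := br x.
HB.instance Definition _ x := GRing.Linear.on (ad x).
HB.instance Definition _ x := GRing.Linear.on (Ad x).

Lemma ad_derivation x : is_derivation br (ad x).
Proof. by move=> u v; rewrite /ad !applyrE br_leibniz addrC. Qed.

Lemma Ad_antiderivation x : is_antiderivation br (Ad x).
Proof. by move=> u v; rewrite /Ad br_leibniz addrK. Qed.

Lemma derivationD (f g : V -> V) :
  is_derivation br f -> is_derivation br g -> is_derivation br (f \+ g).
Proof. by move=> hf hg u v /=; rewrite hf hg linearDl linearDr addrACA. Qed.

Lemma antiderivationB (f g : V -> V) :
  is_antiderivation br f -> is_antiderivation br g -> is_antiderivation br (f \- g).
Proof. by move=> hf hg u v /=; rewrite hf hg !linearBl !opprD !opprK addrACA. Qed.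

Lemma derivation_br_eq0 (f : V -> V) u v : is_derivation br f ->
  f u = 0 -> f v = 0 -> f (br u v) = 0.
Proof. by move=> hf fu fv; rewrite hf fu fv linear0l linear0r addr0. Qed.

Lemma antiderivation_br_eq0 (f : V -> V) u v : is_antiderivation br f ->
  f u = 0 -> f v = 0 -> f (br u v) = 0.
Proof. by move=> hf fu fv; rewrite hf fu fv !linear0l subr0. Qed.

End LeibnizAlgebra.

Section BracketR.
Variables (F : fieldType) (n : nat).
Hypothesis n_gt0 : (0 < n)%N.
Local Notation N := n.+1.
Local Notation V := 'rV[F]_N.
Local Notation br := (@brR F n).
Local Notation bv := (@bvec F n).
Let N_gt1 : (1 < N)%N := n_gt0.

(* [entry v k] is the coefficient of e_k (of h when k = 0); it is 0 for k > n. *)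
Definition entry (v : V) (k : nat) : F := if (k < N)%N then v 0 (inord k) else 0.

(* The coefficient of e_k in [x, e_1]. *)
Definition shift (x : V) (k : nat) : F :=
  (1 < k)%N%:R * entry x k.-1 - (k == 1)%N%:R * entry x 0.

Lemma entry_ord (v : V) (j : 'I_N) : entry v j = v 0 j.
Proof. by rewrite /entry ltn_ord inord_val. Qed.

Lemma entry_inj (u v : V) : (forall k, (k < N)%N -> entry u k = entry v k) -> u = v.
Proof. by move=> euv; apply/rowP => j; rewrite -!entry_ord euv. Qed.

Lemma entryD (u v : V) k : entry (u + v) k = entry u k + entry v k.
Proof. by rewrite /entry; case: ifP; rewrite ?mxE ?addr0. Qed.

Lemma entryN (u : V) k : entry (- u) k = - entry u k.
Proof. by rewrite /entry; case: ifP; rewrite ?mxE ?oppr0. Qed.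

Lemma entryZ a (u : V) k : entry (a *: u) k = a * entry u k.
Proof. by rewrite /entry; case: ifP; rewrite ?mxE ?mulr0. Qed.

Lemma entry0 k : entry 0 k = 0.
Proof. by rewrite /entry; case: ifP; rewrite ?mxE. Qed.

Lemma entry_bvec m k : entry (bv m) k = ((k == m) && (k < N)%N)%:R.
Proof. by rewrite /entry; case: ifP => hk; rewrite ?mxE ?inordK ?andbT ?andbF. Qed.

Lemma br_basis_entry (a b j : 'I_N) : @br_basis F n a b 0 j =
  ((a : nat) == j)%:R * ((b : nat) == 0%N)%:R * (j : nat)%:R
  + ((a : nat) == (j : nat).-1)%:R * ((b : nat) == 1%N)%:R * (1 < j)%N%:R
  - ((a : nat) == 0%N)%:R * ((b : nat) == 1%N)%:R * ((j : nat) == 1%N)%:R.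
Proof.
case: a b j => [a Ha] [b Hb] [j Hj]; rewrite /br_basis /bvec /=.
case: a Ha => [|[|a]] Ha; case: b Hb => [|[|b]] Hb; case: j Hj => [|[|j]] Hj;
  rewrite /= ?mxE /= ?scaler0 ?mxE //= ?eqSS 1?eq_sym; try ring.
by case: eqP => [->|_]; rewrite ?eqxx /=; ring.
Qed.

Lemma brR_entry x y k : (k < N)%N ->
  entry (br x y) k = entry y 1 * shift x k + entry y 0 * (k%:R * entry x k).
Proof.
move=> hk; rewrite -[k]/(val (Ordinal hk)) entry_ord /brR summxE.
under eq_bigr => a _ do rewrite summxE.
under eq_bigr => a _ do under eq_bigr => b _ do rewrite mxE br_basis_entry -!entry_ord.
set j := Ordinal hk.
transitivity (
    \sum_(a < N) \sum_(b < N) ((a : nat) == j)%:R * ((b : nat) == 0%N)%:R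
      * (entry x a * entry y b * j%:R)
  + \sum_(a < N) \sum_(b < N) ((a : nat) == j.-1)%:R * ((b : nat) == 1%N)%:R
      * (entry x a * entry y b * (1 < j)%N%:R)
  - \sum_(a < N) \sum_(b < N) ((a : nat) == 0%N)%:R * ((b : nat) == 1%N)%:R
      * (entry x a * entry y b * (j == 1%N :> nat)%:R)).
  rewrite -big_split -sumrB; apply: eq_bigr => a _.
  rewrite -big_split -sumrB; apply: eq_bigr => b _ /=; ring.
rewrite !(sum2_ord_delta _ (fun a b => entry x a * entry y b * _)).
have hj1 : (j.-1 < N)%N by apply: leq_ltn_trans (leq_pred _) hk.
rewrite hk hj1 /j /= /shift.
case: (ltnP 1 N) => [_ | N_le1] /=; first ring.
have -> : entry y 1 = 0 by rewrite /entry ltnNge N_le1.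
ring.
Qed.

Lemma brR_is_bilinear : bilinear_for
  (GRing.Scale.Law.clone _ _ *:%R _) (GRing.Scale.Law.clone _ _ *:%R _) br.
Proof.
split=> [w|u] a u' v; apply: entry_inj => k hk;
  by rewrite ?(entryD, entryZ) !brR_entry // /shift ?(entryD, entryZ); ring.
Qed.

HB.instance Definition _ :=
  bilinear_isBilinear.Build F V V V _ _ br brR_is_bilinear.

Lemma brR_leibniz u v w : br (br u v) w = br u (br v w) + br (br u w) v.
Proof.
apply: entry_inj => k hk.
have hk1 : (k.-1 < N)%N by apply: leq_ltn_trans (leq_pred _) hk.
rewrite entryD !(brR_entry _ _ hk) /shift !(brR_entry _ _ hk1).
rewrite !(brR_entry _ _ (ltn0Sn n)) !(brR_entry _ _ N_gt1) /shift.
by case: k hk hk1 => [|[|[|k]]] hk hk1 /=; rewrite ?mulrS; ring.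
Qed.

Local Notation H := (bv 0).
Local Notation E := (bv 1).

Lemma brR_bvecE k : (0 < k)%N -> br (bv k) E = bv k.+1.
Proof.
move=> k_gt0; apply: entry_inj => j hj.
rewrite brR_entry // !entry_bvec /shift !entry_bvec hj N_gt1.
case: j hj => [|[|j]] hj /=; rewrite ?andbT.
- ring.
- by case: k k_gt0 => [|[|k]] //= _; ring.
- by rewrite eqSS (ltnW hj) andbT; ring.
Qed.

Lemma bvec_delta (j : 'I_N) : bv j = 'e_j.
Proof. by apply/rowP => k; rewrite !mxE eqxx. Qed.

Lemma linear_eq0_on_generators (f : {linear V -> V}) :
  f H = 0 -> f E = 0 -> (forall u v, f u = 0 -> f v = 0 -> f (br u v) = 0) ->
  forall y, f y = 0.
Proof.
move=> fH fE f_br.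
have f_bvec k : f (bv k) = 0.
  by elim: k => [//|[//|k] IH]; rewrite -brR_bvecE // f_br.
move=> y; rewrite (row_sum_delta y) linear_sum big1 // => j _.
by rewrite linearZ_LR -bvec_delta f_bvec scaler0.
Qed.

End BracketR.

Section Biderivation.
Variables (F : fieldType) (n : nat).
Hypotheses (F_char0 : has_pchar0 F) (n_gt1 : (1 < n)%N).
Local Notation N := n.+1.
Local Notation V := 'rV[F]_N.
Local Notation br := (@brR F n).
Local Notation bv := (@bvec F n).
Local Notation H := (bv 0).
Local Notation E := (bv 1).
Local Notation entry := (@entry F n).
Let n_gt0 : (0 < n)%N := ltnW n_gt1.
Let N_gt1 : (1 < N)%N := n_gt0.
Let N_gt2 : (2 < N)%N := n_gt1.

Variables d D : {linear V -> V}.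
Hypothesis bider : is_biderivation br d D.

Lemma natrS_neq0 k : k.+1%:R != 0 :> F.
Proof. by rewrite ((pcharf0P F).1 F_char0). Qed.

Local Ltac entry_simpl :=
  rewrite ?(entryD, entryN, entryZ, entry0) ?brR_entry // /shift
    ?(entryD, entryN, entryZ, entry_bvec) /=.

Lemma brR_HH : br H H = 0.
Proof. apply: entry_inj => k hk; entry_simpl; case: k hk => [|k] hk /=; ring. Qed.

Lemma brR_EH : br E H = E.
Proof.
apply: entry_inj => k hk; entry_simpl.
by case: k hk => [|[|k]] hk /=; rewrite ?hk; ring.
Qed.

Lemma entry1_d_D y : entry (d y) 1 = entry (D y) 1.
Proof.
have [_ _ /(_ H y)/(congr1 (entry^~ 1%N))] := bider; entry_simpl => e.
by apply: (cancel_scaled_diff (c := -1) _ e); [rewrite oppr_eq0 oner_eq0 | ring].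
Qed.

Lemma entry_dH k : (1 < k)%N -> entry (d H) k = 0.
Proof.
case: k => [|[|k]] // _; case: (ltnP k.+2 N) => hk; last by rewrite /entry ltnNge hk.
have [/(_ H H)/(congr1 (entry^~ k.+2)) + _ _] := bider.
rewrite brR_HH linear0; entry_simpl => e.
by apply: (cancel_scaled_diff (c := - k.+2%:R) _ e); [rewrite oppr_eq0 natrS_neq0 | ring].
Qed.

Lemma entry_dE_dH k : (k < N)%N -> entry (d E) k =
  k%:R * entry (d E) k + (k == 2)%N%:R * entry (d H) 1 + (k == 1)%N%:R * entry (d H) 0.
Proof.
have [/(_ E H)/(congr1 (entry^~ k)) + _ _] := bider.
rewrite brR_EH => e hk; move: e; entry_simpl => {1}->.
by case: k hk => [|[|[|k]]] hk; rewrite /= ?hk ?N_gt1 /=; ring.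
Qed.

Lemma entry_DE_DH k : (k < N)%N ->
  entry (D E) k = k%:R * entry (D E) k - shift (D H) k.
Proof.
have [_ /(_ E H)/(congr1 (entry^~ k)) + _] := bider.
rewrite brR_EH => e hk; move: e; rewrite entryD entryN; entry_simpl => {1}->.
by rewrite N_gt1 /=; ring.
Qed.

Lemma entry_dE0 : entry (d E) 0 = 0.
Proof. by rewrite (entry_dE_dH (ltn0Sn n)) /=; ring. Qed.

Lemma entry_dH0 : entry (d H) 0 = 0.
Proof.
have /= e := entry_dE_dH N_gt1.
by apply: (cancel_scaled_diff (c := -1) _ e); [rewrite oppr_eq0 oner_eq0 | ring].
Qed.

Lemma entry_dE2 : entry (d E) 2 = - entry (d H) 1.
Proof.
have /= e := entry_dE_dH N_gt2.
by apply: (cancel_scaled_diff (c := -1) _ e); [rewrite oppr_eq0 oner_eq0 | ring].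
Qed.

Lemma entry_dE k : (2 < k)%N -> entry (d E) k = 0.
Proof.
case: k => [|[|[|k]]] // _; case: (ltnP k.+3 N) => hk; last by rewrite /entry ltnNge hk.
have /= e := entry_dE_dH hk.
by apply: (cancel_scaled_diff (c := - k.+2%:R) _ e); [rewrite oppr_eq0 natrS_neq0 | ring].
Qed.

Lemma entry_DE0 : entry (D E) 0 = 0.
Proof. by rewrite (entry_DE_DH (ltn0Sn n)) /shift /=; ring. Qed.

Lemma entry_DH0 : entry (D H) 0 = 0.
Proof.
have /= e := entry_DE_DH N_gt1; rewrite /shift /= in e.
by apply: (cancel_scaled_diff (c := -1) _ e); [rewrite oppr_eq0 oner_eq0 | ring].
Qed.

Lemma entry_DE k : (k.+2 < N)%N -> k.+1%:R * entry (D E) k.+2 = entry (D H) k.+1.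
Proof.
move=> hk; have e := entry_DE_DH hk; rewrite /shift /= in e.
by apply: (cancel_scaled_diff (c := -1) _ e); [rewrite oppr_eq0 oner_eq0 | ring].
Qed.

(* Read off from the e_1-coefficient of d e_1 = -[e_1, x] and from
   D h = [x, h] = \sum_k k x_k e_k. *)
Definition inner_elt : V :=
  \row_(k < N) if (k : nat) == 0%N then - entry (d E) 1 else entry (D H) k / k%:R.
Local Notation x := inner_elt.

Lemma entry_inner_elt0 : entry x 0 = - entry (d E) 1.
Proof. by rewrite /entry /inner_elt mxE inordK. Qed.

Lemma entry_inner_eltS k : entry x k.+1 = entry (D H) k.+1 / k.+1%:R.
Proof.
rewrite {1}/entry; case: ifP => hk; last by rewrite /entry hk mul0r.
by rewrite /inner_elt mxE inordK.
Qed.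

Lemma d_H : d H = - br H x.
Proof.
apply: entry_inj => k hk; entry_simpl.
case: k hk => [|[|k]] hk; rewrite /= ?N_gt1 /=.
- by rewrite entry_dH0; ring.
- by rewrite entry_inner_eltS entry1_d_D divr1; ring.
- by rewrite entry_dH //; ring.
Qed.

Lemma d_E : d E = - br E x.
Proof.
apply: entry_inj => k hk; entry_simpl.
case: k hk => [|[|[|k]]] hk; rewrite /= ?N_gt1 ?N_gt2 /=.
- by rewrite entry_dE0; ring.
- by rewrite entry_inner_elt0; ring.
- by rewrite entry_dE2 entry_inner_eltS entry1_d_D divr1; ring.
- by rewrite entry_dE //; ring.
Qed.

Lemma D_H : D H = br x H.
Proof.
apply: entry_inj => k hk; entry_simpl.
case: k hk => [|k] hk /=.
- by rewrite entry_DH0; ring.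
- by rewrite entry_inner_eltS [k.+1%:R * _]mulrC divfK ?natrS_neq0 //; ring.
Qed.

Lemma D_E : D E = br x E.
Proof.
apply: entry_inj => k hk; entry_simpl.
case: k hk => [|[|k]] hk; rewrite /= ?N_gt1 /=.
- by rewrite entry_DE0; ring.
- by rewrite entry_inner_elt0 entry1_d_D; ring.
- rewrite entry_inner_eltS -(entry_DE hk) [k.+1%:R * _]mulrC mulfK ?natrS_neq0 //.
  ring.
Qed.

Lemma derivation_inner y : d y = - br y x.
Proof.
have [d_der _ _] := bider.
have f_der := derivationD d_der (ad_derivation (brR_leibniz n_gt0) x).
apply/eqP; rewrite -addr_eq0; apply/eqP.
apply: (linear_eq0_on_generators n_gt0 (f := d \+ ad br x)) => [||u v].
- by rewrite /= d_H /ad applyrE addNr.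
- by rewrite /= d_E /ad applyrE addNr.
- exact: derivation_br_eq0 f_der.
Qed.

Lemma antiderivation_inner y : D y = br x y.
Proof.
have [_ D_anti _] := bider.
have g_anti := antiderivationB D_anti (Ad_antiderivation (brR_leibniz n_gt0) x).
apply/eqP; rewrite -subr_eq0; apply/eqP.
apply: (linear_eq0_on_generators n_gt0 (f := D \- Ad br x)) => [||u v].
- by rewrite /= D_H subrr.
- by rewrite /= D_E subrr.
- exact: antiderivation_br_eq0 g_anti.
Qed.

Lemma biderivation_inner : is_inner_biderivation br d D.
Proof. by exists x => y; split; [exact: derivation_inner | exact: antiderivation_inner]. Qed.

End Biderivation.

Theorem mainTheorem9 (n : nat) (hn : (2 <= n)%N)
  (d D : {linear 'rV[CC]_(n.+1) -> 'rV[CC]_(n.+1)}) :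
  is_biderivation (@brR _ n) d D ->
  is_inner_biderivation (@brR _ n) d D.
Proof.
move=> bider; apply: (@biderivation_inner _ n _ hn d D bider).
exact: Num.Theory.pchar_num.
Qed.
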